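(* Let $X\subseteq\Omega$ be club in $\Omega$ with $0\notin X$, and let $\xi\in\hat\varepsilon_{\Omega+1}$. Then $\Theta_X(\xi)\notin X'$ if and only if $\xi<\Omega$ and $\xi\in\mathrm{JUMP}(X)$.
   Context: $\Omega$ is the first uncountable ordinal; $\varepsilon_{\Omega+1}$ the least $\varepsilon>\Omega$ with $\omega^\varepsilon=\varepsilon$. Every $0<\xi<\varepsilon_{\Omega+1}$ has a unique $\Omega$-normal form $\xi=\Omega^{\alpha}\beta+\gamma$ with $0<\beta<\Omega$, $\gamma<\Omega^{\alpha}$. $C(0)=\{0\}$, $C(\Omega^\alpha\beta+\gamma)=C(\alpha)\cup C(\gamma)\cup\{\beta\}$; $\xi^*=\max C(\xi)$. For $\theta<\Omega$: $0[\theta]=1[\theta]=0$; $(\Omega^\alpha\beta+\gamma)[\theta]=\Omega^\alpha\beta+\gamma[\theta]$ if $\gamma>0$; $(\Omega^\alpha\beta)[\theta]=\Omega^\alpha\theta$ if $\beta$ is a limit; $\Omega^{\alpha+1}[\theta]=\Omega^\alpha\theta$; $(\Omega^\alpha(\beta+1))[\theta]=\Omega^\alpha\beta+(\Omega^\alpha)[\theta]$ if $\beta>0$; $\Omega^\alpha[\theta]=\Omega^{\alpha[\theta]}$ if $\alpha$ is a limit. $\tau(0)=0$, $\tau(\zeta+1)=1$, $\tau(\Omega^\alpha\beta+\gamma)=\tau(\gamma)$ if $\gamma>0$, $\tau(\Omega^\alpha\beta)=\beta$ if $\beta$ limit, $\tau(\Omega^\alpha(\beta+1))=\tau(\alpha)$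 if $\alpha$ limit, $\tau(\Omega^{\alpha+1}(\beta+1))=\Omega$. $\Theta_X(\xi)$ is the least $\theta\in X$ with $\theta>\xi^*$ such that all $\zeta<\xi$ with $\zeta^*<\theta$ have $\Theta_X(\zeta)<\theta$. $\Omega_0=1$, $\Omega_{n+1}=\Omega^{\Omega_n}$, $\Theta_X(\varepsilon_{\Omega+1})=\sup_n\Theta_X(\Omega_n)$, $\hat\varepsilon_{\Omega+1}=\{\xi<\varepsilon_{\Omega+1}:\xi^*<\Theta_X(\varepsilon_{\Omega+1})\}$; $X'$ is the set of limit points of $X$. $\mathrm{FIX}(X)$ is the set of $\xi<\varepsilon_{\Omega+1}$ with $(\xi[1])^*<\xi^*=\tau(\xi)=\Theta_X(\gamma)$ for some $\gamma>\xi$; $\mathrm{JUMP}(X)=\{0\}\cup\{\text{successor ordinals}\}\cup\mathrm{FIX}(X)$. *)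

(* classical. Ordinals below epsilon_{Omega+1} via Omega-normal forms
   with coefficients in an abstract model of the first uncountable ordinal. *)
From Stdlib Require Import List ClassicalEpsilon.
Import ListNotations.

Set Implicit Arguments.

(* This characterizes omega_1 up to isomorphism.
   Zero and successor are included as operations together with their
   characterizing properties (they are uniquely determined by the order). *)
Record Omega1 := {
  W :> Type;
  wlt : W -> W -> Prop;
  wlt_irrefl : forall a, ~ wlt a a;
  wlt_trans : forall a b c, wlt a b -> wlt b c -> wlt a c;
  wlt_total : forall a b, wlt a b \/ a = b \/ wlt b a;
  wlt_wf : well_founded wlt;
  wlt_seg_countable : forall a, exists f : {b : W | wlt b a} -> nat,
      forall x y, f x = f y -> x = y;
  W_uncountable : ~ exists f : W -> nat, forall x y, f x = f y -> x = y;
  wzero : W;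
  wzero_least : forall a, ~ wlt a wzero;
  wsucc : W -> W;
  wsucc_lt : forall a, wlt a (wsucc a);
  wsucc_least : forall a b, wlt a b -> b = wsucc a \/ wlt (wsucc a) b
}.

Arguments wlt {o}.
Arguments wzero {o}.
Arguments wsucc {o}.

Definition dec (P : Prop) : bool :=
  if excluded_middle_informative P then true else false.

Section Ord.
Context {Om : Omega1}.

Definition wone : Om := wsucc wzero.
Definition wle (a b : Om) : Prop := wlt a b \/ a = b.
Definition wmax (a b : Om) : Om := if dec (wlt a b) then b else a.
Definition w_is_succ (b : Om) : Prop := exists p, wsucc p = b.
Definition w_is_limit (b : Om) : Prop := b <> wzero /\ ~ w_is_succ b.
Definition wpred (b : Om) : Om := epsilon (inhabits wzero) (fun p => wsucc p = b).

(* Terms: Tp a b c denotes Omega^a * b + c. *)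
Inductive T : Type :=
| Tz : T
| Tp : T -> Om -> T -> T.

Fixpoint tlt (x y : T) : Prop :=
  match x, y with
  | _, Tz => False
  | Tz, Tp _ _ _ => True
  | Tp a b c, Tp a' b' c' =>
      tlt a a' \/ (a = a' /\ (wlt b b' \/ (b = b' /\ tlt c c')))
  end.

Fixpoint nf (x : T) : Prop :=
  match x with
  | Tz => True
  | Tp a b c => nf a /\ b <> wzero /\ nf c /\
      match c with Tz => True | Tp a' _ _ => tlt a' a end
  end.

Definition tone : T := Tp Tz wone Tz.

Definition tmul (a : T) (th : Om) : T := if dec (th = wzero) then Tz else Tp a th Tz.

Definition below_Omega (x : T) : Prop :=
  match x with Tz => True | Tp a _ _ => a = Tz end.

Fixpoint t_is_succ (x : T) : Prop :=
  match x with
  | Tz => False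
  | Tp a b c => match c with
                | Tz => a = Tz /\ w_is_succ b
                | Tp _ _ _ => t_is_succ c
                end
  end.
Definition t_is_limit (x : T) : Prop := x <> Tz /\ ~ t_is_succ x.

Fixpoint tpred (x : T) : T :=
  match x with
  | Tz => Tz
  | Tp a b c => match c with
                | Tz => tmul a (wpred b)
                | Tp _ _ _ => Tp a b (tpred c)
                end
  end.

Fixpoint Cset (x : T) : list Om :=
  match x with
  | Tz => [wzero]
  | Tp a b c => Cset a ++ Cset c ++ [b]
  end.
Definition star (x : T) : Om := fold_right wmax wzero (Cset x).

Fixpoint fs (x : T) (th : Om) : T :=
  match x with
  | Tz => Tz
  | Tp a b c =>
      match c with
      | Tp _ _ _ => Tp a b (fs c th)
      | Tz =>
          if dec (w_is_limit b) then tmul a th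
          else
            (* b = b' + 1 ; first compute (Omega^a)[theta] *)
            let pw := if dec (a = Tz) then Tz
                      else if dec (t_is_succ a) then tmul (tpred a) th
                      else Tp (fs a th) wone Tz in
            let b' := wpred b in
            if dec (b' = wzero) then pw else Tp a b' pw
      end
  end.

(* tau; None stands for the value Omega *)
Fixpoint tau (x : T) : option Om :=
  match x with
  | Tz => Some wzero
  | Tp a b c =>
      match c with
      | Tp _ _ _ => tau c
      | Tz =>
          if dec (w_is_limit b) then Some b
          else if dec (a = Tz) then Some wone
          else if dec (t_is_limit a) then tau a
          else None
      end
  end.

Definition derived (X : Om -> Prop) (th : Om) : Prop :=
  th <> wzero /\ forall a, wlt a th -> exists x, X x /\ wlt a x /\ wlt x th.
Definition club (X : Om -> Prop) : Prop :=
  (forall a, exists x, X x /\ wlt a x) /\ (forall th, derived X th -> X th).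

Definition Theta_cond (X : Om -> Prop) (f : T -> Om) (xi : T) (th : Om) : Prop :=
  X th /\ wlt (star xi) th /\
  forall z, nf z -> tlt z xi -> wlt (star z) th -> wlt (f z) th.
Definition IsTheta (X : Om -> Prop) (f : T -> Om) : Prop :=
  forall xi, nf xi -> Theta_cond X f xi (f xi) /\
    forall th, Theta_cond X f xi th -> wle (f xi) th.
Definition Theta (X : Om -> Prop) : T -> Om :=
  epsilon (inhabits (fun _ => wzero)) (IsTheta X).

(* Omega_n and hat-epsilon_{Omega+1};  a < sup_n Theta(Omega_n) iff a < Theta(Omega_n) for some n *)
Fixpoint Omn (n : nat) : T :=
  match n with O => tone | S m => Tp (Omn m) wone Tz end.
Definition in_hat (X : Om -> Prop) (xi : T) : Prop :=
  nf xi /\ exists n, wlt (star xi) (Theta X (Omn n)).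

Definition FIX (X : Om -> Prop) (xi : T) : Prop :=
  nf xi /\ wlt (star (fs xi wone)) (star xi) /\ tau xi = Some (star xi) /\
  exists g, nf g /\ tlt xi g /\ Theta X g = star xi.
Definition JUMP (X : Om -> Prop) (xi : T) : Prop :=
  xi = Tz \/ t_is_succ xi \/ FIX X xi.

End Ord.

From Stdlib Require Import List ClassicalEpsilon Classical FunctionalExtensionality Cantor.
Import ListNotations.

(* [Theta X xi] is the least point of [X] above [xi^*] lying beyond every earlier value
   [Theta X z] with [z^*] below it; it exists because terms with coefficients below a
   countable ordinal are countable, so a club contains a point closed under them.
   For [xi >= Omega] the values [Theta X c], [c < Theta X xi], lie in [X] and are cofinal
   below [Theta X xi], which is therefore a limit point of [X].  For [xi = 0] and
   [xi = p + 1] nothing of [X] lies between [0] (resp. [Theta X p]) and [Theta X xi].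
   For a limit [b < Omega], if [Theta X b] is isolated in [X] then all [Theta X c], [c < b],
   stay below [b] (else their supremum would be a smaller candidate); so [b] is in [X], and
   the least [g] with [g^* < b <= Theta X g], which exists as [b] is in hat-epsilon, has
   [Theta X g = b] and [g > b]: this is the FIX condition.  Conversely such a [g] makes [b]
   the predecessor of [Theta X b] in [X]. *)

Section WellOrder.
Context {Om : Omega1}.
Implicit Types a b c u : Om.

Lemma wlt_asym {a b} : wlt a b -> ~ wlt b a.
Proof. intros h1 h2. exact (wlt_irrefl _ a (wlt_trans _ _ _ _ h1 h2)). Qed.

Lemma wle_lt_trans {a b c} : wle a b -> wlt b c -> wlt a c.
Proof. intros [h|<-] h2; [exact (wlt_trans _ _ _ _ h h2) | exact h2]. Qed.

Lemma wlt_le_trans {a b c} : wlt a b -> wle b c -> wlt a c.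
Proof. intros h [h2|<-]; [exact (wlt_trans _ _ _ _ h h2) | exact h]. Qed.

Lemma wnlt_le {a b} : ~ wlt a b -> wle b a.
Proof. intros h. destruct (wlt_total _ a b) as [h1|[h1|h1]]; [contradiction | right; auto | left; auto]. Qed.

Lemma wle_nlt {a b} : wle a b -> ~ wlt b a.
Proof. intros [h|<-]; [exact (wlt_asym h) | apply wlt_irrefl]. Qed.

Lemma wle_antisym {a b} : wle a b -> wle b a -> a = b.
Proof. intros [h|h] h2; [exfalso; exact (wle_nlt h2 h) | exact h]. Qed.

Lemma wle_zero_l a : wle wzero a.
Proof. apply wnlt_le, wzero_least. Qed.

Lemma wlt_zero_l {a} : a <> wzero -> wlt wzero a.
Proof. intros h. destruct (wle_zero_l a) as [h1|h1]; [exact h1 | congruence]. Qed.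

Lemma wsucc_neq_zero a : wsucc a <> wzero.
Proof. intros e. apply (wzero_least _ a). rewrite <- e. apply wsucc_lt. Qed.

Lemma wlt_succ_le {a b} : wlt a (wsucc b) -> wle a b.
Proof.
  intros h. apply wnlt_le. intros h2.
  destruct (wsucc_least _ _ _ h2) as [e|e]; subst.
  - exact (wlt_irrefl _ _ h).
  - exact (wlt_asym h e).
Qed.

Lemma wsucc_lt_limit {a b} : w_is_limit b -> wlt a b -> wlt (wsucc a) b.
Proof.
  intros [_ hb] h. destruct (wsucc_least _ _ _ h) as [e|e]; [|exact e].
  exfalso. apply hb. exists a. exact (eq_sym e).
Qed.

Lemma wone_lt_limit {b} : w_is_limit b -> wlt wone b.
Proof. intros hb. apply wsucc_lt_limit; [exact hb | apply wlt_zero_l, hb]. Qed.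

Lemma w_zero_succ_or_limit b : b = wzero \/ w_is_succ b \/ w_is_limit b.
Proof.
  destruct (classic (b = wzero)) as [h0|h0]; [left; exact h0|].
  destruct (classic (w_is_succ b)) as [hs|hs]; [right; left; exact hs | right; right; split; assumption].
Qed.

Lemma wmax_cases a b : wmax a b = a \/ wmax a b = b.
Proof. unfold wmax, dec. destruct excluded_middle_informative; auto. Qed.

Lemma wmax_ge_l a b : wle a (wmax a b).
Proof. unfold wmax, dec. destruct excluded_middle_informative; [left | right]; auto. Qed.

Lemma wmax_ge_r a b : wle b (wmax a b).
Proof. unfold wmax, dec. destruct excluded_middle_informative; [right; auto | apply wnlt_le; auto]. Qed.

Lemma wle_least (Q : Om -> Prop) : (exists w, Q w) -> exists m, Q m /\ forall w, Q w -> wle m w.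
Proof.
  intros [w0 hw0]. apply NNPP. intros hn. revert hw0. pattern w0.
  apply (well_founded_ind (wlt_wf Om)). intros w IH hw. apply hn. exists w. split; [exact hw|].
  intros w' hw'. apply wnlt_le. intros hl. exact (IH w' hl hw').
Qed.

Lemma wsup (P : Om -> Prop) u : (forall x, P x -> wle x u) ->
  exists s, (forall x, P x -> wle x s) /\ forall a, wlt a s -> exists x, P x /\ wlt a x.
Proof.
  intros hu. destruct (wle_least (fun s => forall x, P x -> wle x s)) as [s [hs hmin]]; [eauto|].
  exists s. split; [exact hs|]. intros a ha. apply NNPP. intros hn.
  apply (@wle_nlt s a); [|exact ha]. apply hmin. intros x hx.
  apply wnlt_le. intros h. apply hn. eauto.
Qed.

Lemma club_sup {X : Om -> Prop} (P : Om -> Prop) u : club X ->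
  (exists x, P x) -> (forall x, P x -> X x) -> (forall x, P x -> exists y, P y /\ wlt x y) ->
  (forall x, P x -> wle x u) ->
  exists s, X s /\ (forall x, P x -> wlt x s) /\ forall a, wlt a s -> exists x, P x /\ wlt a x.
Proof.
  intros hX [x0 hx0] hPX hnomax hu. destruct (wsup P u hu) as [s [hs hcof]].
  assert (hlt : forall x, P x -> wlt x s).
  { intros x hx. destruct (hnomax x hx) as [y [hy hxy]]. exact (wlt_le_trans hxy (hs y hy)). }
  exists s. split; [|split; assumption]. apply (proj2 hX). split.
  - intros e. apply (wzero_least _ x0). rewrite <- e. exact (hlt x0 hx0).
  - intros a ha. destruct (hcof a ha) as [x [hx hax]]. exists x. auto.
Qed.

End WellOrder.

Section Terms.
Context {Om : Omega1}.
Implicit Types a b c u : Om.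
Implicit Types x y z : @T Om.

Lemma star_ge {x a} : In a (Cset x) -> wle a (star x).
Proof.
  unfold star. induction (Cset x) as [|d l IH]; simpl; [tauto|]. intros [<-|h].
  - apply wmax_ge_l.
  - destruct (IH h) as [h1|<-]; [left; exact (wlt_le_trans h1 (wmax_ge_r _ _)) | apply wmax_ge_r].
Qed.

Lemma star_le x u : (forall a, In a (Cset x) -> wle a u) -> wle (star x) u.
Proof.
  unfold star. induction (Cset x) as [|d l IH]; simpl; intros h; [apply wle_zero_l|].
  destruct (wmax_cases d (fold_right wmax wzero l)) as [e|e]; rewrite e; auto.
Qed.

Definition emb c : @T Om := tmul Tz c.

Lemma emb_zero : emb wzero = Tz.
Proof. unfold emb, tmul, dec. destruct excluded_middle_informative; congruence. Qed.

Lemma emb_neq_zero {b} : b <> wzero -> emb b = Tp Tz b Tz.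
Proof. intros h. unfold emb, tmul, dec. destruct excluded_middle_informative; congruence. Qed.

Lemma nf_emb c : nf (emb c).
Proof.
  destruct (classic (c = wzero)) as [->|h]; [rewrite emb_zero; exact I|].
  rewrite (emb_neq_zero h). simpl. tauto.
Qed.

Lemma star_emb c : star (emb c) = c.
Proof.
  apply wle_antisym.
  - apply star_le. destruct (classic (c = wzero)) as [->|h].
    + rewrite emb_zero. intros a [<-|[]]. right; reflexivity.
    + rewrite (emb_neq_zero h). simpl. intros a [<-|[<-|[<-|[]]]]; (apply wle_zero_l || (right; reflexivity)).
  - destruct (classic (c = wzero)) as [->|h]; [apply wle_zero_l|].
    apply star_ge. rewrite (emb_neq_zero h). simpl. auto.
Qed.

Lemma below_Omega_nf_emb {z} : nf z -> below_Omega z -> exists c, z = emb c.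
Proof.
  destruct z as [|x b y]; [exists wzero; exact (eq_sym emb_zero)|].
  simpl. intros [_ [hb [_ hy]]] ->. exists b. rewrite (emb_neq_zero hb).
  destruct y as [|x' b' y']; [reflexivity|]. destruct x'; contradiction.
Qed.

Lemma tlt_trans {x y z} : tlt x y -> tlt y z -> tlt x z.
Proof.
  revert y z. induction x as [|x1 IH1 b x2 IH2]; intros y z h1 h2;
    destruct y as [|y1 b' y2]; destruct z as [|z1 b'' z2]; simpl in *; auto; try contradiction.
  destruct h1 as [h1|[<- h1]]; destruct h2 as [h2|[<- h2]]; [left; eauto | left; exact h1 | left; exact h2|].
  right; split; [reflexivity|].
  destruct h1 as [h1|[<- h1]]; destruct h2 as [h2|[<- h2]];
    [left; exact (wlt_trans _ _ _ _ h1 h2) | left; exact h1 | left; exact h2 | right; eauto].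
Qed.

Lemma tlt_emb {c d} : wlt c d -> tlt (emb c) (emb d).
Proof.
  intros h. assert (hd : d <> wzero) by (intros ->; exact (wzero_least _ _ h)).
  rewrite (emb_neq_zero hd). destruct (classic (c = wzero)) as [->|hc].
  - rewrite emb_zero. exact I.
  - rewrite (emb_neq_zero hc). simpl. auto.
Qed.

Lemma tlt_emb_r {z b} : nf z -> tlt z (emb b) -> exists c, z = emb c /\ wlt c b.
Proof.
  intros hz hl. destruct (classic (b = wzero)) as [->|hb].
  { rewrite emb_zero in hl. destruct z; contradiction. }
  rewrite (emb_neq_zero hb) in hl.
  destruct z as [|z1 b' z2]; [exists wzero; split; [exact (eq_sym emb_zero) | apply wlt_zero_l, hb]|].
  destruct hl as [hl|[-> [hl|[-> hl]]]]; [destruct z1; contradiction | | destruct z2; contradiction].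
  destruct hz as [_ [hb' [_ hz2]]]. destruct z2 as [|x b2 y]; [|destruct x; contradiction].
  exists b'. split; [exact (eq_sym (emb_neq_zero hb')) | exact hl].
Qed.

Lemma tlt_emb_not_below {x} c : ~ below_Omega x -> tlt (emb c) x.
Proof.
  destruct x as [|x1 b x2]; simpl; [tauto|]. intros hx1.
  destruct (classic (c = wzero)) as [->|hc]; [rewrite emb_zero; exact I|].
  rewrite (emb_neq_zero hc). left. destruct x1; [contradiction | exact I].
Qed.

Lemma star_Omn n : wle (star (@Omn Om n)) wone.
Proof.
  apply star_le. induction n as [|n IH]; simpl.
  - intros a [<-|[<-|[<-|[]]]]; (apply wle_zero_l || (right; reflexivity)).
  - intros a h. apply in_app_or in h. destruct h as [h|[<-|[<-|[]]]]; auto; [apply wle_zero_l | right; reflexivity].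
Qed.

Lemma nf_Omn n : nf (@Omn Om n).
Proof. induction n; simpl; repeat split; auto; apply wsucc_neq_zero. Qed.

Definition tlt_nf z x : Prop := nf z /\ tlt z x.

Lemma tlt_nf_Acc_Tz : Acc tlt_nf Tz.
Proof. constructor. intros z [_ h]. destruct z; contradiction. Qed.

Lemma tlt_nf_Acc_Tp x : Acc tlt_nf x -> forall b y, nf (Tp x b y) -> Acc tlt_nf (Tp x b y).
Proof.
  induction 1 as [x _ IHx]. intros b. pattern b. apply (well_founded_ind (wlt_wf Om)).
  clear b. intros b IHb y hn.
  assert (hy : Acc tlt_nf y).
  { destruct y as [|x2 b2 y2]; [exact tlt_nf_Acc_Tz|].
    destruct hn as [_ [_ [hy hl]]]. apply IHx; [split; [apply hy | exact hl] | exact hy]. }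
  revert hn. induction hy as [y _ IHy]. intros hn. constructor. intros z [hz hl].
  destruct z as [|x' b' y']; [exact tlt_nf_Acc_Tz|].
  destruct hl as [hl|[-> [hl|[-> hl]]]].
  - apply IHx; [split; [apply hz | exact hl] | exact hz].
  - apply IHb; assumption.
  - apply IHy; [split; [apply hz | exact hl] | exact hz].
Qed.

Lemma tlt_nf_wf : well_founded tlt_nf.
Proof.
  assert (H : forall x, nf x -> Acc tlt_nf x).
  { induction x as [|x IHx b y _]; intros hx; [exact tlt_nf_Acc_Tz|].
    apply tlt_nf_Acc_Tp; [apply IHx, hx | exact hx]. }
  intros x. constructor. intros z [hz _]. exact (H z hz).
Qed.

Lemma tlt_nf_min (Q : @T Om -> Prop) : (exists x, nf x /\ Q x) ->
  exists m, nf m /\ Q m /\ forall z, nf z -> tlt z m -> ~ Q z.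
Proof.
  intros [x0 [h0 q0]]. apply NNPP. intros hn. revert h0 q0. pattern x0.
  apply (well_founded_ind tlt_nf_wf). intros x IH hx qx. apply hn. exists x.
  split; [exact hx|]. split; [exact qx|]. intros z hz hl qz. exact (IH z (conj hz hl) hz qz).
Qed.

End Terms.

Section Countability.
Context {Om : Omega1}.

Lemma wlt_seg_inj (a : Om) : exists e : Om -> nat,
  forall w w', wlt w a -> wlt w' a -> e w = e w' -> w = w'.
Proof.
  destruct (wlt_seg_countable _ a) as [e he].
  exists (fun w => match excluded_middle_informative (wlt w a) with
                   | left h => e (exist _ w h) | right _ => 0 end).
  intros w w' h h'.
  destruct excluded_middle_informative; [|contradiction].
  destruct excluded_middle_informative; [|contradiction].
  intros E. exact (f_equal (@proj1_sig _ _) (he _ _ E)).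
Qed.

(* Otherwise [W] would be covered by the countably many countable segments below the [wsucc (g n)]. *)
Lemma nat_seq_bounded (g : nat -> Om) : exists u, forall n, wlt (g n) u.
Proof.
  apply NNPP. intros hunb.
  assert (hcov : forall u, exists n, wlt u (wsucc (g n))).
  { intros u. apply NNPP. intros hn. apply hunb. exists u. intros n. apply NNPP. intros h.
    apply hn. exists n. exact (wle_lt_trans (wnlt_le h) (wsucc_lt _ _)). }
  destruct (choice _ hcov) as [N hN].
  destruct (choice _ (fun n => wlt_seg_inj (wsucc (g n)))) as [e he].
  apply (W_uncountable Om). exists (fun u => to_nat (N u, e (N u) u)).
  intros x y E. apply to_nat_inj in E. injection E as EN Ee. rewrite <- EN in Ee.
  apply (he (N x)); [apply hN | rewrite EN; apply hN | exact Ee].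
Qed.

Lemma countable_family_bounded {A : Type} (P : A -> Prop) (enc : A -> nat) (F : A -> Om) :
  (forall x y, P x -> P y -> enc x = enc y -> x = y) -> exists u, forall x, P x -> wlt (F x) u.
Proof.
  intros hinj.
  assert (hval : forall n, exists w, forall x, P x -> enc x = n -> w = F x).
  { intros n. destruct (classic (exists x, P x /\ enc x = n)) as [[x0 [hx0 e0]]|hno].
    - exists (F x0). intros x hx e. f_equal. apply hinj; congruence.
    - exists wzero. intros x hx e. exfalso. eauto. }
  destruct (choice _ hval) as [g hg]. destruct (nat_seq_bounded g) as [u hu].
  exists u. intros x hx. rewrite <- (hg (enc x) x hx eq_refl). apply hu.
Qed.

Fixpoint tenc (e : Om -> nat) (x : @T Om) : nat :=
  match x with
  | Tz => 0
  | Tp x1 b x2 => S (to_nat (tenc e x1, to_nat (e b, tenc e x2)))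
  end.

Lemma tenc_inj {a : Om} {e : Om -> nat} :
  (forall w w', wlt w a -> wlt w' a -> e w = e w' -> w = w') ->
  forall x y : @T Om, (forall w, In w (Cset x) -> wlt w a) -> (forall w, In w (Cset y) -> wlt w a) ->
    tenc e x = tenc e y -> x = y.
Proof.
  intros he. induction x as [|x1 IH1 b x2 IH2]; destruct y as [|y1 b' y2];
    cbn [tenc Cset]; intros hx hy E; try discriminate; [reflexivity|].
  apply eq_add_S, to_nat_inj, pair_equal_spec in E as [E1 E].
  apply to_nat_inj, pair_equal_spec in E as [Eb E2].
  f_equal.
  - apply IH1; [intros w hw; apply hx | intros w hw; apply hy | exact E1]; apply in_or_app; auto.
  - apply he; [apply hx | apply hy | exact Eb]; apply in_or_app; right; apply in_or_app; right; left; reflexivity.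
  - apply IH2; [intros w hw; apply hx | intros w hw; apply hy | exact E2];
      apply in_or_app; right; apply in_or_app; auto.
Qed.

Lemma small_terms_bounded (a : Om) (F : @T Om -> Om) :
  exists u, forall z, wlt (star z) a -> wlt (F z) u.
Proof.
  destruct (wlt_seg_inj a) as [e he].
  apply (countable_family_bounded (fun z => wlt (star z) a) (tenc e)).
  intros x y hx hy. apply (tenc_inj he);
    intros w hw; [exact (wle_lt_trans (star_ge hw) hx) | exact (wle_lt_trans (star_ge hw) hy)].
Qed.

Lemma club_closure_point {X : Om -> Prop} (F : @T Om -> Om) (u0 : Om) : club X ->
  exists th, X th /\ wlt u0 th /\ forall z, wlt (star z) th -> wlt (F z) th.
Proof.
  intros hX.
  assert (step : forall th, exists x, X x /\ wlt th x /\ forall z, wlt (star z) th -> wlt (F z) x).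
  { intros th. destruct (small_terms_bounded th F) as [u hu].
    destruct (proj1 hX (wmax u th)) as [x [hx hl]].
    exists x. split; [exact hx|]. split; [exact (wle_lt_trans (wmax_ge_r _ _) hl)|].
    intros z hz. exact (wlt_trans _ _ _ _ (hu z hz) (wle_lt_trans (wmax_ge_l _ _) hl)). }
  destruct (choice _ step) as [next hnext].
  set (sq n := Nat.iter n next u0).
  destruct (nat_seq_bounded sq) as [u hu].
  destruct (club_sup (fun x => exists n, x = sq (S n)) u hX) as [s [hXs [hlt hcof]]].
  - exists (sq 1). eauto.
  - intros x [n ->]. apply hnext.
  - intros x [n ->]. exists (sq (S (S n))). split; [eauto | apply hnext].
  - intros x [n ->]. left. apply hu.
  - exists s. split; [exact hXs|]. split.
    + exact (wlt_trans _ _ _ _ (proj1 (proj2 (hnext u0))) (hlt (sq 1) (ex_intro _ 0 eq_refl))).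
    + intros z hz. destruct (hcof _ hz) as [x [[n ->] hzx]].
      exact (wlt_trans _ _ _ _ (proj2 (proj2 (hnext _)) z hzx) (hlt _ (ex_intro _ (S n) eq_refl))).
Qed.

Lemma Theta_spec {X : Om -> Prop} : club X -> IsTheta X (Theta X).
Proof.
  intros hX. unfold Theta. apply epsilon_spec.
  set (cond := fun x (rec : forall z, tlt_nf z x -> Om) th =>
         X th /\ wlt (star x) th /\ forall z (h : tlt_nf z x), wlt (star z) th -> wlt (rec z h) th).
  set (least := fun x rec => epsilon (inhabits wzero)
         (fun th => cond x rec th /\ forall th', cond x rec th' -> wle th th')).
  set (f := Fix tlt_nf_wf (fun _ => Om) least).
  assert (feq : forall x, f x = least x (fun z _ => f z)).
  { intros x. apply (Fix_eq tlt_nf_wf (fun _ => Om) least). intros x0 g1 g2 hg. f_equal.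
    apply functional_extensionality_dep; intros z. apply functional_extensionality_dep; intros h. apply hg. }
  exists f. intros xi hxi.
  assert (hmin : cond xi (fun z _ => f z) (f xi) /\ forall th, cond xi (fun z _ => f z) th -> wle (f xi) th).
  { rewrite (feq xi). apply epsilon_spec, wle_least.
    destruct (club_closure_point f (star xi) hX) as [th [h1 [h2 h3]]].
    exists th. split; [exact h1|]. split; [exact h2|]. intros z _. apply h3. }
  destruct hmin as [[h1 [h2 h3]] h4]. split.
  - split; [exact h1|]. split; [exact h2|]. intros z hz hl. exact (h3 z (conj hz hl)).
  - intros th [t1 [t2 t3]]. apply h4. split; [exact t1|]. split; [exact t2|].
    intros z [hz hl]. exact (t3 z hz hl).
Qed.

End Countability.

Section ThetaSolution.
Context {Om : Omega1} {X : Om -> Prop} {f : @T Om -> Om} (HT : IsTheta X f).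
Implicit Types a b c : Om.
Implicit Types x z g : @T Om.

Lemma Theta_in {x} : nf x -> X (f x).
Proof. intros h. apply (HT x h). Qed.

Lemma Theta_gt_star {x} : nf x -> wlt (star x) (f x).
Proof. intros h. apply (HT x h). Qed.

Lemma Theta_lt {x z} : nf x -> nf z -> tlt z x -> wlt (star z) (f x) -> wlt (f z) (f x).
Proof. intros h. apply (HT x h). Qed.

Lemma Theta_least {x th} : nf x -> Theta_cond X f x th -> wle (f x) th.
Proof. intros h. apply (HT x h). Qed.

Lemma Theta_emb_gt c : wlt c (f (emb c)).
Proof. rewrite <- (star_emb c) at 1. apply Theta_gt_star, nf_emb. Qed.

Lemma Theta_emb_lt {c d} : wlt c d -> wlt (f (emb c)) (f (emb d)).
Proof.
  intros h. apply Theta_lt; [apply nf_emb | apply nf_emb | apply tlt_emb, h|].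
  rewrite star_emb. exact (wlt_trans _ _ _ _ h (Theta_emb_gt d)).
Qed.

Lemma Theta_derived x : nf x ->
  (forall a, wlt a (f x) -> exists z, nf z /\ tlt z x /\ wlt (star z) (f x) /\ wlt a (f z)) ->
  derived X (f x).
Proof.
  intros hx hcof. split.
  - intros e. apply (wzero_least _ (star x)). rewrite <- e. exact (Theta_gt_star hx).
  - intros a ha. destruct (hcof a ha) as [z [hz [hzx [hs haz]]]].
    exists (f z). split; [exact (Theta_in hz)|]. split; [exact haz | exact (Theta_lt hx hz hzx hs)].
Qed.

(* [f x] is the least element of [X] above [a]: any element of [X] in between would satisfy [Theta_cond]. *)
Lemma Theta_not_derived x a : nf x -> wlt a (f x) -> wle (star x) a ->
  (forall z, nf z -> tlt z x -> wlt (star z) (f x) -> wle (f z) a) -> ~ derived X (f x).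
Proof.
  intros hx ha hs hz [_ hd]. destruct (hd a ha) as [y [hy [hay hyx]]].
  assert (hcond : Theta_cond X f x y).
  { split; [exact hy|]. split; [exact (wle_lt_trans hs hay)|].
    intros z hz' hl hsz. exact (wle_lt_trans (hz z hz' hl (wlt_trans _ _ _ _ hsz hyx)) hay). }
  exact (wle_nlt (Theta_least hx hcond) hyx).
Qed.

Lemma Theta_derived_not_below {x} : nf x -> ~ below_Omega x -> derived X (f x).
Proof.
  intros hx hb. apply Theta_derived; [exact hx|]. intros a ha.
  exists (emb a). split; [apply nf_emb|]. split; [exact (tlt_emb_not_below a hb)|].
  rewrite star_emb. split; [exact ha | apply Theta_emb_gt].
Qed.

Lemma Theta_zero_not_derived : ~ derived X (f Tz).
Proof.
  rewrite <- emb_zero. apply (Theta_not_derived _ wzero).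
  - apply nf_emb.
  - apply Theta_emb_gt.
  - rewrite star_emb. right; reflexivity.
  - intros z _ hz. rewrite emb_zero in hz. destruct z; contradiction.
Qed.

Lemma Theta_succ_not_derived p : ~ derived X (f (emb (wsucc p))).
Proof.
  apply (Theta_not_derived _ (f (emb p))).
  - apply nf_emb.
  - apply Theta_emb_lt, wsucc_lt.
  - rewrite star_emb. destruct (wsucc_least _ _ _ (Theta_emb_gt p)) as [e|e]; [right | left]; auto.
  - intros z hz hl _. destruct (tlt_emb_r hz hl) as [c [-> hc]].
    destruct (wlt_succ_le hc) as [h| ->]; [left; exact (Theta_emb_lt h) | right; reflexivity].
Qed.

Lemma Theta_emb_not_derived_of_hit {b g} : nf g -> tlt (emb b) g -> f g = b -> ~ derived X (f (emb b)).
Proof.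
  intros hg hbg hfg. apply (Theta_not_derived _ b).
  - apply nf_emb.
  - apply Theta_emb_gt.
  - rewrite star_emb. right; reflexivity.
  - intros z hz hl _. destruct (tlt_emb_r hz hl) as [c [-> hc]]. left. rewrite <- hfg.
    apply Theta_lt; [exact hg | apply nf_emb | exact (tlt_trans hl hbg) | rewrite star_emb, hfg; exact hc].
Qed.

Lemma Theta_hit {b g0} : X b -> nf g0 -> wlt (star g0) b -> wle b (f g0) ->
  exists g, nf g /\ wlt (star g) b /\ f g = b.
Proof.
  intros hXb hg0 hs0 hb0.
  destruct (tlt_nf_min (fun g => wlt (star g) b /\ wle b (f g))) as [g [hg [[hsg hbg] hmin]]]; [eauto|].
  exists g. split; [exact hg|]. split; [exact hsg|]. apply wle_antisym; [|exact hbg].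
  apply (Theta_least hg). split; [exact hXb|]. split; [exact hsg|].
  intros z hz hzg hsz. apply NNPP. intros h. apply (hmin z hz hzg). split; [exact hsz | apply wnlt_le, h].
Qed.

Section Closed.
Hypothesis hX : club X.

(* If some [f (emb c0) >= b], then below [f (emb b)] the [f (emb c)], [c < b], are either cofinal
   or bounded by a supremum that lies in [X] and satisfies [Theta_cond], contradicting minimality. *)
Lemma Theta_emb_lt_limit {b} : w_is_limit b -> ~ derived X (f (emb b)) ->
  forall c, wlt c b -> wlt (f (emb c)) b.
Proof.
  intros hlim hnd c0 hc0. apply NNPP. intros hge. apply wnlt_le in hge. apply hnd.
  apply Theta_derived; [apply nf_emb|]. intros a ha.
  destruct (classic (exists c, wlt c b /\ wlt a (f (emb c)))) as [[c [hc hac]]|hno].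
  { exists (emb c). split; [apply nf_emb|]. split; [apply tlt_emb, hc|].
    rewrite star_emb. split; [exact (wlt_trans _ _ _ _ hc (Theta_emb_gt b)) | exact hac]. }
  exfalso.
  destruct (club_sup (fun y => exists c, wlt c b /\ y = f (emb c)) a hX) as [s [hXs [hlt hcof]]].
  - exists (f (emb c0)). eauto.
  - intros y [c [_ ->]]. apply Theta_in, nf_emb.
  - intros y [c [hc ->]]. exists (f (emb (wsucc c))).
    split; [exists (wsucc c); split; [apply wsucc_lt_limit | ]; auto | apply Theta_emb_lt, wsucc_lt].
  - intros y [c [hc ->]]. apply wnlt_le. intros h. apply hno. eauto.
  - assert (hsa : wle s a).
    { apply wnlt_le. intros h. destruct (hcof a h) as [y [[c [hc ->]] hay]]. apply hno. eauto. }
    assert (hcond : Theta_cond X f (emb b) s).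
    { split; [exact hXs|]. split.
      - rewrite star_emb. exact (wle_lt_trans hge (hlt _ (ex_intro _ c0 (conj hc0 eq_refl)))).
      - intros z hz hl _. destruct (tlt_emb_r hz hl) as [c [-> hc]]. apply hlt. eauto. }
    exact (wle_nlt (Theta_least (nf_emb b) hcond) (wle_lt_trans hsa ha)).
Qed.

Lemma Theta_hit_of_not_derived {b g0} : w_is_limit b -> nf g0 -> wlt (star g0) b -> wle b (f g0) ->
  ~ derived X (f (emb b)) -> exists g, nf g /\ tlt (emb b) g /\ f g = b.
Proof.
  intros hlim hg0 hs0 hb0 hnd.
  pose proof (Theta_emb_lt_limit hlim hnd) as hbelow.
  assert (hXb : X b).
  { apply (proj2 hX). split; [apply hlim|]. intros a ha.
    exists (f (emb a)). split; [apply Theta_in, nf_emb|]. split; [apply Theta_emb_gt | exact (hbelow a ha)]. }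
  destruct (Theta_hit hXb hg0 hs0 hb0) as [g [hg [hsg hfg]]].
  exists g. split; [exact hg|]. split; [|exact hfg].
  apply tlt_emb_not_below. intros hgb. destruct (below_Omega_nf_emb hg hgb) as [c ->].
  rewrite star_emb in hsg. apply (wlt_irrefl _ b). rewrite <- hfg at 1. exact (hbelow c hsg).
Qed.

End Closed.

End ThetaSolution.

Section Jump.
Context {Om : Omega1} (X : Om -> Prop).

Lemma dec_true (P : Prop) : P -> dec P = true.
Proof. intros h. unfold dec. destruct excluded_middle_informative; [reflexivity | contradiction]. Qed.

Lemma JUMP_emb_succ (p : Om) : JUMP X (emb (wsucc p)).
Proof.
  right; left. rewrite (emb_neq_zero (wsucc_neq_zero p)). split; [reflexivity | exists p; reflexivity].
Qed.

Lemma JUMP_emb_limit {b : Om} : w_is_limit b ->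
  JUMP X (emb b) <-> exists g, nf g /\ tlt (emb b) g /\ Theta X g = b.
Proof.
  intros hlim. pose proof (emb_neq_zero (proj1 hlim)) as eb.
  assert (hfs : fs (emb b) wone = emb wone) by (rewrite eb; simpl; rewrite dec_true; auto).
  assert (htau : tau (emb b) = Some b) by (rewrite eb; simpl; rewrite dec_true; auto).
  split.
  - intros [h|[h|[_ [_ [_ [g [hg [hbg hgb]]]]]]]].
    + rewrite eb in h. discriminate.
    + rewrite eb in h. destruct h as [_ hs]. exfalso. exact (proj2 hlim hs).
    + rewrite star_emb in hgb. eauto.
  - intros hg. right; right. split; [apply nf_emb|].
    rewrite hfs, htau, !star_emb. split; [exact (wone_lt_limit hlim)|]. split; [reflexivity | exact hg].
Qed.

End Jump.

Theorem proposition4p8 (Om : Omega1) (X : Om -> Prop) :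
  club X -> ~ X wzero ->
  forall xi : @T Om, in_hat X xi ->
    (~ derived X (Theta X xi) <-> (below_Omega xi /\ JUMP X xi)).
Proof.
  intros hX _ xi [hxi [n hn]].
  pose proof (Theta_spec hX) as HT.
  destruct (classic (below_Omega xi)) as [hb|hb].
  2:{ split; [|tauto]. intros hnd. contradiction (hnd (Theta_derived_not_below HT hxi hb)). }
  destruct (below_Omega_nf_emb hxi hb) as [b ->]. rewrite star_emb in hn.
  destruct (w_zero_succ_or_limit b) as [->|[[p <-]|hlim]].
  - rewrite emb_zero. split; [intros _; split; [exact I | left; reflexivity] | intros _].
    exact (Theta_zero_not_derived HT).
  - split; [intros _; split; [exact hb | apply JUMP_emb_succ] | intros _].
    exact (Theta_succ_not_derived HT p).
  - rewrite (JUMP_emb_limit X hlim). split.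
    + intros hnd. split; [exact hb|]. apply (Theta_hit_of_not_derived HT hX hlim (nf_Omn n)); [|left; exact hn|exact hnd].
      exact (wle_lt_trans (star_Omn n) (wone_lt_limit hlim)).
    + intros [_ [g [hg [hbg hgb]]]]. exact (Theta_emb_not_derived_of_hit HT hg hbg hgb).
Qed.
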